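(* Let $G$ be an abelian Hausdorff topological group and let $A\subseteq G$. The following conditions are equivalent: (i) $A$ is both topologically independent and absolutely Cauchy summable in $G$; (ii) the Kalton map $K_A:S_A\to G$ is a topologically isomorphic embedding (i.e. a continuous injective homomorphism which is a homeomorphism onto its image $K_A(S_A)=\langle A\rangle$).
   Context: All groups are abelian and all topological groups are Hausdorff. For $a\in G$, $\langle a\rangle$ denotes the cyclic subgroup generated by $a$ with the subspace topology, and $\langle A\rangle$ denotes the subgroup generated by $A$. For $A\subseteq G\setminus\{0\}$, $P_A=\prod_{a\in A}\langle a\rangle$ carries the Tychonoff product topology, and $S_A=\bigoplus_{a\in A}\langle a\rangle$ (elements of $P_A$ with finitely many nonzero coordinates) carries the subspace topology from $P_A$. The Kalton map $K_A:S_A\to G$ is the unique group homomorphism extending each inclusion $\langle a\rangle\to G$, $a\in A$ (so $K_A(\{g_a\})=\sum_a g_a$). A subset $A\subseteq G$ is absolutely Cauchy summable if for every neighbourhood $U$ of $0$ there is a finite $F\subseteq A$ with $\langle A\setminus F\rangle\subseteq U$. A subset $A\subseteq G$ is topologically independent if $0\notin A$ and for every neighbourhood $W$ of $0$ there is a neighbourhood $U$ of $0$ such that for every finite $F\subseteq A$ and all integers $\{z_a:a\in F\}$, $\sum_{a\in F}z_aa\in U$ implies $z_aa\in W$ for all $a\in F$. (Condition (ii) is to be read for $0\notin A$, so that $K_A$ is defined.) *)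

From HB Require Import structures.
From mathcomp Require Import all_boot all_order all_algebra.
From mathcomp Require Import all_classical all_reals all_analysis.
Set Implicit Arguments. Unset Strict Implicit. Unset Printing Implicit Defensive.
Import Order.TTheory GRing.Theory Num.Theory.
Local Open Scope classical_set_scope.
Local Open Scope ring_scope.

Section KaltonDefs.
Variable G : topologicalZmodType.

Definition cyclic_sub (a : G) : set G := [set x | exists n : int, x = a *~ n].

Definition gen_subgroup (A : set G) : set G :=
  [set x | forall H : set G, A `<=` H -> H 0 ->
     (forall u v, H u -> H v -> H (u - v)) -> H x].

Definition abs_cauchy_summable (A : set G) : Prop :=
  forall U : set G, nbhs (0 : G) U ->
    exists F : set G, [/\ finite_set F, F `<=` A & gen_subgroup (A `\` F) `<=` U].

Definition topologically_independent (A : set G) : Prop :=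
  ~ A 0 /\
  forall W : set G, nbhs (0 : G) W ->
    exists2 U : set G, nbhs (0 : G) U &
      forall (F : set G) (z : G -> int), finite_set F -> F `<=` A ->
        U (\sum_(a \in F) a *~ z a) -> forall a, F a -> W (a *~ z a).

(* S_A : elements of prod_{a in A} <a> (coordinates indexed by a : G, zero off A)
   with finitely many nonzero coordinates *)
Definition S_set (A : set G) : set (G -> G) :=
  [set g | [/\ forall a, A a -> cyclic_sub a (g a),
              forall a, ~ A a -> g a = 0 &
              finite_set [set a | g a != 0]]].

(* Neighbourhoods of x in S_A for the subspace topology of the Tychonoff
   product P_A of the subspaces <a> of G. *)
Definition S_nbhs (A : set G) (x : G -> G) (V : set (G -> G)) : Prop :=
  exists F : set G, [/\ finite_set F, F `<=` A &
    exists U : G -> set G, (forall a, F a -> nbhs (x a) (U a)) /\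
      forall y, S_set A y -> (forall a, F a -> U a (y a)) -> V y].

Definition kalton (g : G -> G) : G := \sum_(a \in [set a | g a != 0]) g a.

Definition kalton_embedding (A : set G) : Prop :=
  [/\ (forall x y, S_set A x -> S_set A y -> kalton (x + y) = kalton x + kalton y),
      (forall x y, S_set A x -> S_set A y -> kalton x = kalton y -> x = y),
      (forall x, S_set A x -> forall U : set G, nbhs (kalton x) U ->
          S_nbhs A x [set y | U (kalton y)]) &
      (forall x, S_set A x -> forall V, S_nbhs A x V ->
          exists2 W : set G, nbhs (kalton x) W &
            forall y, S_set A y -> W (kalton y) ->
              exists y', [/\ S_set A y', V y' & kalton y' = kalton y])].

End KaltonDefs.

From HB Require Import structures.
From mathcomp Require Import all_boot all_order all_algebra.
From mathcomp Require Import all_classical all_reals all_analysis.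
From mathcomp Require Import finmap.
Set Implicit Arguments. Unset Strict Implicit. Unset Printing Implicit Defensive.
Import GRing.Theory.
Local Open Scope classical_set_scope.
Local Open Scope ring_scope.

(* (i) -> (ii): if h is close to g on a finite set F, then K h - K g is the
   sum of the finitely many small differences h a - g a (a in F) and of an
   element of <A \ F>, which absolute Cauchy summability makes small.
   Conversely, topological independence says exactly that small values of K
   have small coordinates; this gives injectivity (G being Hausdorff) and
   openness of K onto its image.
   (ii) -> (i): the elements of S_A vanishing on F form a subgroup whose image
   under K contains A \ F, so continuity of K at 0 puts <A \ F> into any
   neighbourhood of 0; and openness at 0 together with injectivity turns a
   small sum of multiples z_a a into small coordinates z_a a. *)

Section TopologicalZmodule.
Variable G : topologicalZmodType.
Implicit Types (x : G) (U V W : set G).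

Lemma nbhs_translate0 x U : nbhs x U -> nbhs (0 : G) [set w | U (x + w)].
Proof.
move=> Ux; have /= := @add_continuous G (x, 0) U; rewrite addr0 => /(_ Ux).
move=> [B] [B1 B2] BU; apply: filterS B2 => w Bw.
exact: (BU (x, w)) (conj (nbhs_singleton B1) Bw).
Qed.

Lemma nbhs_translate x U : nbhs (0 : G) U -> nbhs x [set y | U (y - x)].
Proof.
move=> U0; have /= := @sub_continuous G (x, x) U; rewrite subrr => /(_ U0).
move=> [B] [B1 B2] BU; apply: filterS B1 => w Bw.
exact: (BU (w, x)) (conj Bw (nbhs_singleton B2)).
Qed.

Lemma nbhs0_halve U : nbhs (0 : G) U ->
  exists2 V, nbhs (0 : G) V & forall u v, V u -> V v -> U (u + v).
Proof.
move=> U0; have /= := @add_continuous G (0, 0) U; rewrite addr0 => /(_ U0).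
move=> [B] [B1 B2] BU; exists (B.1 `&` B.2); first exact: filterI.
by move=> u v [Bu _] [_ Bv]; exact: (BU (u, v)).
Qed.

Lemma nbhs0_big_sum (I : eqType) (s : seq I) U : nbhs (0 : G) U ->
  exists2 V, nbhs (0 : G) V &
    forall f : I -> G, (forall i, i \in s -> V (f i)) -> U (\sum_(i <- s) f i).
Proof.
elim: s U => [|i s IHs] U U0.
  by exists U => // f _; rewrite big_nil; exact: nbhs_singleton.
have [V1 V10 V1U] := nbhs0_halve U0; have [V2 V20 V2V1] := IHs _ V10.
exists (V1 `&` V2); first exact: filterI.
move=> f fV; rewrite big_cons; apply: V1U.
  by case: (fV i (mem_head _ _)).
apply: V2V1 => j js.
by have [] : (V1 `&` V2) (f j) by apply: fV; rewrite in_cons js orbT.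
Qed.

Lemma hausdorff_nbhs0_eq0 x : hausdorff_space G ->
  (forall W, nbhs (0 : G) W -> W x) -> x = 0.
Proof.
move=> hG xW; apply/esym/hG => B C B0 Cx.
by exists x; split; [exact: xW | exact: nbhs_singleton].
Qed.

End TopologicalZmodule.

Section KaltonMap.
Variable G : topologicalZmodType.
Implicit Types (g h : G -> G) (F P : set G).

Definition supp g : set G := [set a | g a != 0].

Lemma kalton_widen g P : supp g `<=` P -> kalton g = \sum_(a \in P) g a.
Proof. by move=> gP; apply: fsbig_widen => // a [_ /negP]; rewrite negbK => /eqP. Qed.

Lemma kalton_fset g F : finite_set F -> supp g `<=` F ->
  kalton g = \sum_(a <- fset_set F) g a.
Proof. by move=> fF gF; rewrite (kalton_widen gF) fsbig_finite. Qed.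

Lemma kalton_patch g F :
  kalton (patch (fun=> 0) F g) = \sum_(a \in F) g a.
Proof.
rewrite (@kalton_widen _ F); first by apply: eq_fsbigr => a aF; rewrite patchT.
by move=> a; rewrite /supp /patch /=; case: ifP => [/set_mem|_] //; rewrite eqxx.
Qed.

Lemma kalton0 : kalton (0 : G -> G) = 0.
Proof. exact: fsbig1. Qed.

Lemma kaltonD g h : finite_set (supp g) -> finite_set (supp h) ->
  kalton (g + h) = kalton g + kalton h.
Proof.
move=> fg fh; set P := supp g `|` supp h.
rewrite (@kalton_widen (g + h) P); last first.
  move=> a; rewrite /supp /P /= => gha.
  have [ga|] := eqVneq (g a) 0; last by left.
  by right; move: gha; rewrite !fctE /= ga add0r.
rewrite (@kalton_widen g P) => [|a ga]; last by left.
rewrite (@kalton_widen h P) => [|a ha]; last by right.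
by apply: fsbig_split; rewrite finite_setU.
Qed.

Lemma kaltonN g : finite_set (supp g) -> kalton (- g) = - kalton g.
Proof.
have suppN : supp (- g) = supp g by apply/seteqP; split=> a; rewrite /supp /= oppr_eq0.
move=> fg; apply: (@addrI _ (kalton g)).
by rewrite -kaltonD ?suppN // !subrr kalton0.
Qed.

Lemma kaltonB g h : finite_set (supp g) -> finite_set (supp h) ->
  kalton (g - h) = kalton g - kalton h.
Proof.
move=> fg fh; rewrite kaltonD ?kaltonN //.
by apply: sub_finite_set fh => a; rewrite /supp /= oppr_eq0.
Qed.

End KaltonMap.

Section KaltonDomain.
Variables (G : topologicalZmodType) (A : set G).
Implicit Types (g h : G -> G) (B F : set G).

Lemma cyclic_sub0 (a : G) : cyclic_sub a 0.
Proof. by exists 0; rewrite mulr0z. Qed.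

Lemma cyclic_subB (a u v : G) :
  cyclic_sub a u -> cyclic_sub a v -> cyclic_sub a (u - v).
Proof. by move=> [m ->] [n ->]; exists (m - n); rewrite mulrzBr. Qed.

Lemma S_set_finite g : S_set A g -> finite_set (supp g).
Proof. by case. Qed.

Lemma S_set_supp g : S_set A g -> supp g `<=` A.
Proof.
move=> [_ gA _] a ga; apply: contrapT => nAa.
by move: ga; rewrite /supp /= gA ?eqxx.
Qed.

Lemma S_set_coord g : S_set A g -> exists z : G -> int, forall a, g a = a *~ z a.
Proof.
move=> [gc gA _]; suff /choice[z gz] : forall a, exists n : int, g a = a *~ n.
  by exists z.
move=> a; have [Aa|nAa] := pselect (A a); first exact: gc.
by exists 0; rewrite gA ?mulr0z.
Qed.

Lemma S_set0 : S_set A 0.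
Proof.
split=> [a _||]; [exact: cyclic_sub0 | by [] |].
by apply: sub_finite_set (@finite_set0 G) => a /=; rewrite eqxx.
Qed.

Lemma S_setB g h : S_set A g -> S_set A h -> S_set A (g - h).
Proof.
move=> [gc gA gf] [hc hA hf]; split=> [a Aa|a nAa|].
- exact: cyclic_subB (gc a Aa) (hc a Aa).
- by rewrite !fctE /= gA // hA // subrr.
- apply: sub_finite_set (_ : finite_set (supp g `|` supp h)); last by rewrite finite_setU.
  move=> a /= gha; have [ga|] := eqVneq (g a) 0; last by left.
  by right; move: gha; rewrite !fctE /= ga sub0r oppr_eq0.
Qed.

Lemma S_set_patch g F : S_set A g -> S_set A (patch (fun=> 0) F g).
Proof.
move=> [gc gA gf]; split=> [a Aa|a nAa|]; rewrite /patch.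
- by case: ifP => _; [exact: gc | exact: cyclic_sub0].
- by case: ifP => _ //; exact: gA.
- by apply: sub_finite_set gf => a /=; case: ifP => // _; rewrite eqxx.
Qed.

Lemma S_set_patch_mulz F (z : G -> int) : finite_set F -> F `<=` A ->
  S_set A (patch (fun=> 0) F (fun a => a *~ z a)).
Proof.
move=> fF FA; split=> [a Aa|a nAa|]; rewrite /patch.
- by case: ifP => _; [exists (z a) | exact: cyclic_sub0].
- by case: ifP => // /set_mem /FA.
- by apply: sub_finite_set fF => a /=; case: ifP => [/set_mem|_] //; rewrite eqxx.
Qed.

Lemma S_set_kaltonD g h : S_set A g -> S_set A h ->
  kalton (g + h) = kalton g + kalton h.
Proof. by move=> /S_set_finite fg /S_set_finite fh; exact: kaltonD. Qed.

Lemma S_set_kaltonB g h : S_set A g -> S_set A h ->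
  kalton (g - h) = kalton g - kalton h.
Proof. by move=> /S_set_finite fg /S_set_finite fh; exact: kaltonB. Qed.

Section SubgroupClosure.
Variable H : set G.
Hypotheses (H0 : H 0) (HB : forall u v, H u -> H v -> H (u - v)).

Lemma subgroupN u : H u -> H (- u).
Proof. by move=> Hu; rewrite -sub0r; exact: HB. Qed.

Lemma subgroupD u v : H u -> H v -> H (u + v).
Proof. by move=> Hu Hv; rewrite -[v]opprK; apply: HB => //; exact: subgroupN. Qed.

Lemma subgroup_mulz u n : H u -> H (u *~ n).
Proof.
move=> Hu; have HmulN (k : nat) : H (u *+ k).
  by elim: k => [|k IHk]; rewrite ?mulr0n // mulrS; exact: subgroupD.
by case: n => k; rewrite ?NegzE ?mulrNz -pmulrn //; exact: subgroupN.
Qed.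

Lemma subgroup_kalton B g : B `<=` H -> S_set A g -> supp g `<=` B -> H (kalton g).
Proof.
move=> BH Sg gB; have [z gz] := S_set_coord Sg.
rewrite /kalton; apply: big_ind => //; first exact: subgroupD.
move=> a _; have [->//|ga] := eqVneq (g a) 0.
by rewrite gz; apply/subgroup_mulz/BH/gB.
Qed.

End SubgroupClosure.

Lemma gen_subgroup_mulz B (a : G) n : B a -> gen_subgroup B (a *~ n).
Proof. by move=> Ba H BH H0 HB; apply: subgroup_mulz => //; exact: BH. Qed.

Lemma gen_subgroup_kalton B g : S_set A g -> supp g `<=` B ->
  gen_subgroup B (kalton g).
Proof. by move=> Sg gB H BH H0 HB; exact: subgroup_kalton BH Sg gB. Qed.

Lemma gen_subgroup_diff_sub F : gen_subgroup (A `\` F) `<=`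
  @kalton G @` [set g | S_set A g /\ forall a, F a -> g a = 0].
Proof.
move=> u; apply.
- move=> a [Aa nFa]; exists (patch (fun=> 0) [set a] (fun b => b *~ 1)).
    split; first by apply: S_set_patch_mulz => // b ->.
    by move=> b Fb; rewrite /patch; case: ifP => // /set_mem eba; rewrite -eba in nFa.
  by rewrite kalton_patch fsbig_set1.
- by exists 0; [split; [exact: S_set0|] | exact: kalton0].
- move=> _ _ [g [Sg gF] <-] [h [Sh hF] <-]; exists (g - h).
    split; first exact: S_setB.
    by move=> a Fa; rewrite !fctE /= gF // hF // subrr.
  exact: S_set_kaltonB.
Qed.

End KaltonDomain.

Section KaltonEmbedding.
Variables (G : topologicalZmodType) (A : set G).
Implicit Types (g h : G -> G).

Lemma kalton_continuous0_abs_cauchy_summable :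
  (forall U, nbhs (0 : G) U -> S_nbhs A 0 [set g | U (kalton g)]) ->
  abs_cauchy_summable A.
Proof.
move=> Kcont U U0; have [F [fF FA [V [V0 VU]]]] := Kcont U U0.
exists F; split=> // _ /gen_subgroup_diff_sub[g [Sg gF] <-].
by apply: VU => // a Fa; rewrite gF //; exact: nbhs_singleton (V0 a Fa).
Qed.

Lemma kalton_embedding_top_independent : ~ A 0 -> abs_cauchy_summable A ->
  kalton_embedding A -> topologically_independent A.
Proof.
move=> nA0 acs [_ Kinj _ Kopen]; split=> // W W0.
have [F0 [fF0 F0A F0W]] := acs W W0.
have V0 : S_nbhs A 0 [set g | forall a, F0 a -> W (g a)].
  by exists F0; split=> //; exists (fun=> W).
have [U U0 UV] := Kopen 0 (S_set0 A) _ V0; rewrite kalton0 in U0.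
exists U => // F z fF FA Usum a Fa.
pose d := patch (fun=> 0) F (fun b => b *~ z b).
have Sd : S_set A d := S_set_patch_mulz z fF FA.
have Ud : U (kalton d) by rewrite kalton_patch.
have [g [Sg Vg Kgd]] := UV d Sd Ud.
have <- : d a = a *~ z a by rewrite /d patchT //; exact: mem_set.
have [F0a|nF0a] := pselect (F0 a); first by rewrite -(Kinj _ _ Sg Sd Kgd); exact: Vg.
apply: F0W; rewrite /d patchT; last exact: mem_set.
by apply: gen_subgroup_mulz; split=> //; exact: FA.
Qed.

Lemma top_independent_coord_small W : topologically_independent A ->
  nbhs (0 : G) W -> exists2 U, nbhs (0 : G) U &
    forall g, S_set A g -> U (kalton g) -> forall a, W (g a).
Proof.
move=> [_ ti] W0; have [U U0 UW] := ti W W0; exists U => // g Sg Ug a.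
have [z gz] := S_set_coord Sg.
have [->|ga] := eqVneq (g a) 0; first exact: nbhs_singleton W0.
rewrite gz; apply: UW (S_set_finite Sg) (S_set_supp Sg) _ _ ga.
by move: Ug; rewrite /kalton; under eq_fsbigr => b _ do rewrite gz.
Qed.

Lemma top_independent_kalton_inj : hausdorff_space G ->
  topologically_independent A ->
  forall g h, S_set A g -> S_set A h -> kalton g = kalton h -> g = h.
Proof.
move=> hG ti g h Sg Sh Kgh; apply/funext => a; apply/subr0_eq.
apply: hausdorff_nbhs0_eq0 => // W W0.
have [U U0 UW] := top_independent_coord_small ti W0.
apply: (UW (g - h)); first exact: S_setB.
by rewrite (S_set_kaltonB Sg Sh) Kgh subrr; exact: nbhs_singleton.
Qed.

Lemma abs_cauchy_summable_kalton_continuous : abs_cauchy_summable A ->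
  forall g, S_set A g -> forall U, nbhs (kalton g) U ->
    S_nbhs A g [set h | U (kalton h)].
Proof.
move=> acs g Sg U Ug.
have [V1 V10 V1U] := nbhs0_halve (nbhs_translate0 Ug).
have [F0 [fF0 F0A F0V1]] := acs V1 V10.
pose F := F0 `|` supp g.
have fF : finite_set F by rewrite finite_setU; split=> //; exact: S_set_finite Sg.
have [V2 V20 V2V1] := nbhs0_big_sum (fset_set F) V10.
exists F; split=> //; first by move=> a; rewrite /F => -[/F0A|/(S_set_supp Sg)].
exists (fun a => [set w | V2 (w - g a)]); split=> [a _|h Sh hV2 /=].
  exact: nbhs_translate.
pose h1 := patch (fun=> 0) F h.
have Sh1 : S_set A h1 := S_set_patch F Sh.
have -> : kalton h = kalton g + (kalton (h1 - g) + kalton (h - h1)).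
  by rewrite (S_set_kaltonB Sh1 Sg) (S_set_kaltonB Sh Sh1) addrCA addrA addrNK addrC subrK.
apply: V1U.
- rewrite (@kalton_fset _ _ F) //; last first.
    move=> a; rewrite /supp /h1 /patch !fctE /=; case: ifP => [/set_mem //|nFa].
    by rewrite sub0r oppr_eq0 => ga; right.
  apply: V2V1 => a; rewrite in_fset_set // => /set_mem Fa.
  by rewrite !fctE /= /h1 patchT; [exact: hV2 | exact: mem_set].
- apply: F0V1; apply: (gen_subgroup_kalton (S_setB Sh Sh1)) => a hh1a.
  have nFa : ~ F a.
    by move=> Fa; move: hh1a; rewrite /supp /h1 !fctE /= patchT ?subrr ?eqxx //; exact: mem_set.
  split; first exact: (S_set_supp (S_setB Sh Sh1)).
  by move=> F0a; apply: nFa; left.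
Qed.

Lemma top_independent_kalton_open : topologically_independent A ->
  forall g, S_set A g -> forall V, S_nbhs A g V ->
    exists2 W : set G, nbhs (kalton g) W &
      forall h, S_set A h -> W (kalton h) ->
        exists h', [/\ S_set A h', V h' & kalton h' = kalton h].
Proof.
move=> ti g Sg V [F [fF _ [W [gW WV]]]].
have W0 : nbhs (0 : G) (\bigcap_(a in [set` fset_set F]) [set w | W a (g a + w)]).
  apply: filter_bigI => a; rewrite in_fset_set // => /set_mem Fa.
  exact/nbhs_translate0/gW.
have [U U0 UW] := top_independent_coord_small ti W0.
exists [set v | U (v - kalton g)]; first exact: nbhs_translate.
move=> h Sh Uh; exists h; split=> //; apply: WV => // a Fa.
have := UW (h - g) (S_setB Sh Sg); rewrite (S_set_kaltonB Sh Sg) => /(_ Uh a a).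
rewrite !fctE /= addrCA subrr addr0; apply.
by rewrite /= in_fset_set //; exact: mem_set.
Qed.

Lemma top_independent_kalton_embedding : hausdorff_space G ->
  topologically_independent A -> abs_cauchy_summable A -> kalton_embedding A.
Proof.
move=> hG ti acs; split.
- exact: S_set_kaltonD.
- exact: top_independent_kalton_inj.
- exact: abs_cauchy_summable_kalton_continuous.
- exact: top_independent_kalton_open.
Qed.

End KaltonEmbedding.

Theorem theorem5p1 (G : topologicalZmodType) (hG : hausdorff_space G) (A : set G) :
  (topologically_independent A /\ abs_cauchy_summable A) <->
  (~ A 0 /\ kalton_embedding A).
Proof.
split=> [[ti acs]|[nA0 KA]].
  by split; [case: ti | exact: top_independent_kalton_embedding].
have acs : abs_cauchy_summable A.
  apply: kalton_continuous0_abs_cauchy_summable => U.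
  by case: KA => _ _ Kcont _; have := Kcont 0 (S_set0 A) U; rewrite kalton0.
by split=> //; exact: kalton_embedding_top_independent.
Qed.
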